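(* Let $s>0$ be an integer, $K$ a field, and $A=K[[XY^i\mid 0\le i\le 2s+1]]\subseteq K[[X,Y]]$ (a two-dimensional Cohen--Macaulay local normal domain). Set $I=(XY^i\mid 0\le i\le s)+(XY^{2s+1})$ and $Q=(X,XY^{2s+1})$. Then: (a) $I^2\subseteq Q$ and $\ell_A(I^2/QI)=s$; in particular $\mathcal{G}(I)$ is not Cohen--Macaulay; (b) $I^3=QI^2$; (c) $\ell_A(A/I^{n+1})=(2s+1)\binom{n+2}{2}-2s\binom{n+1}{1}+s$ for all $n\ge0$; (d) $\operatorname{depth}\mathcal{G}(I)=1$.
   Context: $\mathcal{G}(I)=\bigoplus_{n\ge0}I^n/I^{n+1}$ is the associated graded ring of $I$. *)

From mathcomp Require Import all_boot all_order all_algebra.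
Set Implicit Arguments. Unset Strict Implicit. Unset Printing Implicit Defensive.
Import GRing.Theory.
Local Open Scope ring_scope.

Section PowerSeries.
Variable K : fieldType.

(* formal power series in X, Y: f a b = coefficient of X^a Y^b *)
Definition ps := nat -> nat -> K.
Definition ps0 : ps := fun _ _ => 0.
Definition ps1 : ps := fun a b => if (a == 0%N) && (b == 0%N) then 1 else 0.
Definition psadd (f g : ps) : ps := fun a b => f a b + g a b.
Definition psopp (f : ps) : ps := fun a b => - f a b.
Definition psmul (f g : ps) : ps := fun a b =>
  \sum_(i < a.+1) \sum_(j < b.+1) f i j * g (a - i)%N (b - j)%N.
Definition XY (i : nat) : ps := fun a b => if (a == 1%N) && (b == i) then 1 else 0.

Definition psum (n : nat) (F : nat -> ps) : ps := \big[psadd/ps0]_(k < n) F k.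

Variable s : nat.

(* (a,b) lies in the monoid generated by the exponents (1,i), 0 <= i <= 2s+1 *)
Definition inS (a b : nat) : Prop :=
  exists l : seq nat, all (fun i => i <= 2 * s + 1)%N l /\ size l = a /\ sumn l = b.

Definition inA (f : ps) : Prop := forall a b, f a b != 0 -> inS a b.

Definition genA (n : nat) (g : nat -> ps) (f : ps) : Prop :=
  exists c : nat -> ps, (forall k, inA (c k)) /\ f = psum n (fun k => psmul (c k) (g k)).

Definition prodI (I J : ps -> Prop) (f : ps) : Prop :=
  exists n (x y : nat -> ps), (forall k, (k < n)%N -> I (x k) /\ J (y k)) /\
    f = psum n (fun k => psmul (x k) (y k)).

Fixpoint powI (I : ps -> Prop) (n : nat) : ps -> Prop :=
  match n with 0 => inA | m.+1 => prodI (powI I m) I end.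

Definition isIdealA (J : ps -> Prop) : Prop :=
  (forall f, J f -> inA f) /\ J ps0 /\ (forall f g, J f -> J g -> J (psadd f g)) /\
  (forall a f, inA a -> J f -> J (psmul a f)).

Definition sameP {T} (P R : T -> Prop) := forall x, P x <-> R x.
Definition strictsub {T} (P R : T -> Prop) :=
  (forall x, P x -> R x) /\ exists x, R x /\ ~ P x.

Definition chainA (M N : ps -> Prop) (l : nat) (J : nat -> ps -> Prop) : Prop :=
  sameP (J 0%N) M /\ sameP (J l) N /\ (forall k, (k <= l)%N -> isIdealA (J k)) /\
  (forall k, (k < l)%N -> strictsub (J k) (J k.+1)).

Definition lenA (M N : ps -> Prop) (l : nat) : Prop :=
  (exists J, chainA M N l J) /\ (forall m J, chainA M N m J -> (m <= l)%N).

Definition inm (f : ps) : Prop := inA f /\ f 0%N 0%N = 0.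

Variable I : ps -> Prop.

(* representatives: g n is a representative of the degree n component *)
Definition grr := nat -> ps.
Definition Gel (g : grr) : Prop :=
  (forall n, powI I n (g n)) /\ exists N, forall n, (N <= n)%N -> powI I n.+1 (g n).
Definition geq (g h : grr) : Prop := forall n, powI I n.+1 (psadd (g n) (psopp (h n))).
Definition gzero : grr := fun _ => ps0.
Definition gone : grr := fun n => if n == 0%N then ps1 else ps0.
Definition gadd (g h : grr) : grr := fun n => psadd (g n) (h n).
Definition gmul (g h : grr) : grr := fun n =>
  \big[psadd/ps0]_(i < n.+1) psmul (g i) (h (n - i)%N).
Definition gsum (n : nat) (F : nat -> grr) : grr := \big[gadd/gzero]_(k < n) F k.

(* homogeneous maximal ideal  M = m/I (+) G_+ *)
Definition Gmax (g : grr) : Prop := Gel g /\ inm (g 0%N).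

Definition isIdealG (P : grr -> Prop) : Prop :=
  (forall g, P g -> Gel g) /\ (forall g h, P g -> Gel h -> geq g h -> P h) /\
  P gzero /\ (forall g h, P g -> P h -> P (gadd g h)) /\
  (forall a g, Gel a -> P g -> P (gmul a g)).

Definition genG (n : nat) (x : nat -> grr) (h : grr) : Prop :=
  Gel h /\ exists c : nat -> grr, (forall k, (k < n)%N -> Gel (c k)) /\
    geq h (gsum n (fun k => gmul (c k) (x k))).

Definition regG (n : nat) (x : nat -> grr) : Prop :=
  (forall k, (k < n)%N -> Gmax (x k)) /\
  (forall k, (k < n)%N -> forall y, Gel y -> genG k x (gmul (x k) y) -> genG k x y) /\
  ~ genG n x gone.

Definition depthG (d : nat) : Prop :=
  (exists x, regG d x) /\ (forall n x, regG n x -> (n <= d)%N).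

Definition isPrimeG (P : grr -> Prop) : Prop :=
  isIdealG P /\ ~ P gone /\
  (forall g h, Gel g -> Gel h -> P (gmul g h) -> P g \/ P h).

Definition chainG (d : nat) (P : nat -> grr -> Prop) : Prop :=
  (forall k, (k <= d)%N -> isPrimeG (P k)) /\
  (forall k, (k < d)%N -> strictsub (P k) (P k.+1)).

Definition dimG (d : nat) : Prop :=
  (exists P, chainG d P) /\ (forall e P, chainG e P -> (e <= d)%N).

Definition CMG : Prop := exists d, depthG d /\ dimG d.

End PowerSeries.

Definition Igens (K : fieldType) (s : nat) (k : nat) : ps K :=
  if (k <= s)%N then XY K k else XY K (2 * s + 1).
Definition Iid (K : fieldType) (s : nat) : ps K -> Prop := genA s (s.+2) (Igens K s).
Definition Qgens (K : fieldType) (s : nat) (k : nat) : ps K :=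
  if k == 0%N then XY K 0 else XY K (2 * s + 1).
Definition Qid (K : fieldType) (s : nat) : ps K -> Prop := genA s 2 (Qgens K s).
Arguments Iid : clear implicits.
Arguments Qid : clear implicits.

From Pilot Require Import Defs.
From mathcomp Require Import all_boot all_order all_algebra zify.
From Stdlib Require Import FunctionalExtensionality IndefiniteDescription.
Set Implicit Arguments. Unset Strict Implicit. Unset Printing Implicit Defensive.
Import GRing.Theory.
Local Open Scope ring_scope.

(* Everything is monomial.  A consists of the series supported in the cone
   b <= (2s+1) a, and dividing a series term by term by the generators
   X Y^t shows that I^n is the set of series supported in the exponent set
   powExp n (the cone beyond X-degree n, and in X-degree n the cone minus the
   gap (2s+1) n - s <= b < (2s+1) n); likewise for Q, QI and QI^2.  Then:
   - (a1) and (b) are inclusions of exponent sets;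
   - lengths: for monomial ideals M <= N, ell(N/M) is the number of monomials
     in N \ M (lenA_monomial: adding them in order of decreasing X-degree
     gives a composition series, and a rank argument bounds every chain),
     which gives (a2) with s gap monomials and (c) by counting;
   - (d): the initial form f of X Y^(2s+1) is a nonzerodivisor on G(I), while
     the class w of X Y^(2s) in A/I satisfies w M <= f G(I) without lying in
     f G(I), which rules out regular sequences of length 2;
   - G(I) is not Cohen-Macaulay: the diagonal coefficients give a ring map
     onto K[T, Y], whose primes 0 < (Y) < (T, Y) pull back to a chain of
     length 2, so dim G(I) >= 2 > depth G(I). *)

Section PowerSeriesArithmetic.
Variable K : fieldType.
Implicit Types f g h : ps K.

Lemma coef_bigps (T : Type) (r : seq T) (P : pred T) (F : T -> ps K) a b :
  (\big[@psadd K/@ps0 K]_(i <- r | P i) F i) a b = \sum_(i <- r | P i) F i a b.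
Proof. by rewrite (big_morph (fun f : ps K => f a b) (id1 := 0) (op1 := +%R)). Qed.

Lemma coef_psum n (F : nat -> ps K) a b : psum n F a b = \sum_(k < n) F k a b.
Proof. by rewrite /psum coef_bigps. Qed.

Lemma sum_delta (m k : nat) (F : nat -> K) :
  \sum_(i < m) (if i == k :> nat then F i else 0) = if (k < m)%N then F k else 0.
Proof.
have [km|mk] := ltnP k m.
  rewrite (bigD1 (Ordinal km)) //= eqxx big1 ?addr0 // => i ik.
  by case: eqP => // Eik; case/eqP: ik; apply: val_inj.
by rewrite big1 // => i _; case: eqP => // Eik; move: (ltn_ord i); rewrite Eik ltnNge mk.
Qed.

Lemma sum_neq0 (n : nat) (F : 'I_n -> K) :
  \sum_(i < n) F i != 0 -> exists i, F i != 0.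
Proof.
move=> Fneq0; have [i Fi|F0] := pickP (fun i : 'I_n => F i != 0); first by exists i.
by case/eqP: Fneq0; apply: big1 => i _; move: (F0 i) => /negbFE/eqP.
Qed.

(* Bivariate polynomials are power series; conversely, every coefficient of a
   product of series only depends on a finite truncation.  This transfers
   commutativity of {poly {poly K}} to psmul. *)
Definition ps_of_poly (p : {poly {poly K}}) : ps K := fun i j => p`_i`_j.
Definition truncate (N : nat) f : {poly {poly K}} := \poly_(i < N) \poly_(j < N) f i j.

Lemma ps_of_truncate N f i j :
  (i < N)%N -> (j < N)%N -> ps_of_poly (truncate N f) i j = f i j.
Proof. by move=> iN jN; rewrite /ps_of_poly /truncate coef_poly iN coef_poly jN. Qed.

Lemma psmul_poly p q : psmul (ps_of_poly p) (ps_of_poly q) = ps_of_poly (p * q).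
Proof.
apply: functional_extensionality => a; apply: functional_extensionality => b.
by rewrite /psmul /ps_of_poly coefM coef_sum; apply: eq_bigr => i _; rewrite coefM.
Qed.

Lemma psmul_local f g f' g' a b :
  (forall i j, (i <= a)%N -> (j <= b)%N -> f i j = f' i j /\ g i j = g' i j) ->
  psmul f g a b = psmul f' g' a b.
Proof.
move=> E; apply: eq_bigr => i _; apply: eq_bigr => j _.
have ia := ltn_ord i; have jb := ltn_ord j.
by rewrite (E i j _ _).1 ?(E (a - i)%N (b - j)%N _ _).2 //; lia.
Qed.

Lemma psmul_truncate f g N a b : (a < N)%N -> (b < N)%N ->
  psmul f g a b = psmul (ps_of_poly (truncate N f)) (ps_of_poly (truncate N g)) a b.
Proof. by move=> aN bN; apply: psmul_local => i j ia jb; rewrite !ps_of_truncate //; lia. Qed.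

Lemma psmulC f g : psmul f g = psmul g f.
Proof.
apply: functional_extensionality => a; apply: functional_extensionality => b.
pose N := (maxn a b).+1.
rewrite (@psmul_truncate _ _ N) 1?[RHS](@psmul_truncate _ _ N); try lia.
by rewrite !psmul_poly mulrC.
Qed.

Lemma psmulDl f g h : psmul (psadd f g) h = psadd (psmul f h) (psmul g h).
Proof.
apply: functional_extensionality => a; apply: functional_extensionality => b.
rewrite /psadd /psmul -big_split; apply: eq_bigr => i _.
by rewrite -big_split; apply: eq_bigr => j _; rewrite mulrDl.
Qed.

Lemma psmulNl f h : psmul (psopp f) h = psopp (psmul f h).
Proof.
apply: functional_extensionality => a; apply: functional_extensionality => b.
rewrite /psopp /psmul -sumrN; apply: eq_bigr => i _.
by rewrite -sumrN; apply: eq_bigr => j _; rewrite mulNr.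
Qed.

Lemma psmulDr f g h : psmul f (psadd g h) = psadd (psmul f g) (psmul f h).
Proof. by rewrite psmulC psmulDl !(psmulC f). Qed.

Lemma psmulNr f h : psmul f (psopp h) = psopp (psmul f h).
Proof. by rewrite psmulC psmulNl psmulC. Qed.

Lemma psmul0l h : psmul (@ps0 K) h = @ps0 K.
Proof.
apply: functional_extensionality => a; apply: functional_extensionality => b.
by rewrite /psmul /ps0 big1 // => i _; rewrite big1 // => j _; rewrite mul0r.
Qed.

Lemma psmul_XY_term f (t a b i j : nat) : (i <= a)%N -> (j <= b)%N ->
  f i j * XY K t (a - i)%N (b - j)%N =
  if i == a.-1 then (if j == (b - t)%N then
    (if (0 < a)%N && (t <= b)%N then f i j else 0) else 0) else 0.
Proof.
move=> ia jb; rewrite /XY.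
have -> : ((a - i == 1) && (b - j == t))%N =
          [&& i == a.-1, j == (b - t)%N & (0 < a)%N && (t <= b)%N].
  apply/idP/idP.
    by case/andP=> /eqP ? /eqP ?; apply/and3P; split; [apply/eqP|apply/eqP|apply/andP; split]; lia.
  by case/and3P=> /eqP ? /eqP ? /andP[? ?]; apply/andP; split; apply/eqP; lia.
case: (i == a.-1); case: (j == (b - t)%N); case: ((0 < a)%N && (t <= b)%N);
  by rewrite /= ?mulr1 ?mulr0.
Qed.

Lemma psmul_XY f t a b :
  psmul f (XY K t) a b = if (0 < a)%N && (t <= b)%N then f a.-1 (b - t)%N else 0.
Proof.
pose c := (0 < a)%N && (t <= b)%N.
transitivity (\sum_(i < a.+1) (if i == a.-1 :> nat then
   \sum_(j < b.+1) (if j == (b - t)%N :> nat then (if c then f i j else 0) else 0) else 0)).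
  apply: eq_bigr => i _; have ia := ltn_ord i.
  case: ifP => Ei; [apply: eq_bigr | rewrite big1 //] => j _; have jb := ltn_ord j;
    by rewrite psmul_XY_term ?Ei //; lia.
rewrite (sum_delta _ _ (fun i => \sum_(j < b.+1)
  (if j == (b - t)%N :> nat then (if c then f i j else 0) else 0))) ifT; last by lia.
by rewrite (sum_delta _ _ (fun j => if c then f a.-1 j else 0)) ifT //; lia.
Qed.

Lemma psmul_XYl f t a b :
  psmul (XY K t) f a b = if (0 < a)%N && (t <= b)%N then f a.-1 (b - t)%N else 0.
Proof. by rewrite psmulC psmul_XY. Qed.

Definition supported f (X : nat -> nat -> bool) := forall a b, f a b != 0 -> X a b.

Lemma supported_psmul f g (X1 X2 X3 : nat -> nat -> bool) :
  supported f X1 -> supported g X2 ->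
  (forall a1 b1 a2 b2, X1 a1 b1 -> X2 a2 b2 -> X3 (a1 + a2)%N (b1 + b2)%N) ->
  supported (psmul f g) X3.
Proof.
move=> Sf Sg X12 a b /sum_neq0 [i /sum_neq0 [j]].
rewrite mulf_eq0 negb_or => /andP [/Sf X1ij /Sg X2ij].
have := X12 _ _ _ _ X1ij X2ij; have ia := ltn_ord i; have jb := ltn_ord j.
by rewrite !subnKC //; lia.
Qed.

Lemma supported_psadd f g X : supported f X -> supported g X -> supported (psadd f g) X.
Proof.
move=> Sf Sg a b; rewrite /psadd; have [f0|fn0 _] := eqVneq (f a b) 0.
  by rewrite f0 add0r; apply: Sg.
exact: Sf.
Qed.

Lemma supported_psopp f X : supported f X -> supported (psopp f) X.
Proof. by move=> Sf a b; rewrite /psopp oppr_eq0; apply: Sf. Qed.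

Lemma supported_ps0 X : supported (@ps0 K) X.
Proof. by move=> a b; rewrite /ps0 eqxx. Qed.

Lemma supported_psum n (F : nat -> ps K) X :
  (forall k, (k < n)%N -> supported (F k) X) -> supported (psum n F) X.
Proof. by move=> SF a b; rewrite coef_psum => /sum_neq0 [k]; apply: SF. Qed.

Lemma supported_sub f (X Y : nat -> nat -> bool) :
  supported f X -> (forall a b, X a b -> Y a b) -> supported f Y.
Proof. by move=> Sf XsubY a b /Sf /XsubY. Qed.

Lemma supported_XY t : supported (XY K t) (fun a b => (a == 1%N) && (b == t)).
Proof. by move=> a b; rewrite /XY; case: ifP => //; rewrite eqxx. Qed.

Lemma supported_diff (u v : ps K) (X : nat -> nat -> bool) :
  (forall a b, ~~ X a b -> u a b = v a b) -> supported (psadd u (psopp v)) X.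
Proof.
move=> E a b; rewrite /psadd /psopp; case Xab: (X a b) => //.
by rewrite E ?Xab // subrr eqxx.
Qed.

End PowerSeriesArithmetic.

Section MonomialIdeals.
Variable K : fieldType.
Variable s : nat.
Implicit Types f g h : ps K.

Definition inCone (a b : nat) : bool := (b <= (2 * s + 1) * a)%N.

(* Exponents of the monomials of I^n: beyond degree n in X everything in the
   cone; in X-degree exactly n the gap (2s+1)n - s <= b < (2s+1)n is missing. *)
Definition powExp (n a b : nat) : bool := ((b <= (2 * s + 1) * a) &&
  ((n < a) || ((a == n) && ((b + s < (2 * s + 1) * n) || (b == (2 * s + 1) * n)))))%N.

Definition QExp (a b : nat) : bool := ((b <= (2 * s + 1) * a) &&
  ((1 < a) || ((a == 1) && ((b == 0) || (b == 2 * s + 1)))))%N.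
Definition QIExp (a b : nat) : bool := ((b <= (2 * s + 1) * a) &&
  ((2 < a) || ((a == 2) &&
     ((b <= s) || ((2 * s + 1 <= b) && (b <= 3 * s + 1)) || (b == 4 * s + 2)))))%N.

Lemma inS_inCone a b : inS s a b <-> inCone a b.
Proof.
rewrite /inCone; split.
  move=> [l [Hl [<- <-]]]; elim: l Hl => //= i l IH /andP [Hi Hl].
  by have := IH Hl; lia.
elim: a b => [|a IH] b Hb.
  by exists [::]; split => //=; split => //; lia.
have [l [Hl [Hsize Hsum]]] := IH (b - minn b (2 * s + 1))%N ltac:(lia).
exists (minn b (2 * s + 1) :: l); split; first by rewrite /= Hl andbT; lia.
by split; [rewrite /= Hsize | rewrite /= Hsum; lia].
Qed.

Lemma inA_supported f : inA s f <-> supported f inCone.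
Proof. by split => Hf a b /Hf /inS_inCone. Qed.

Lemma powExp0 a b : powExp 0 a b = inCone a b.
Proof.
by rewrite /powExp /inCone; apply/idP/idP => [/andP [] // | ?]; apply/andP; split => //; lia.
Qed.

Lemma powExpD n m a1 b1 a2 b2 :
  powExp n a1 b1 -> powExp m a2 b2 -> powExp (n + m) (a1 + a2) (b1 + b2).
Proof. rewrite /powExp; nia. Qed.

Lemma powExp_cone n a b : powExp n a b -> inCone a b.
Proof. by case/andP. Qed.

Lemma powExp_mono m n a b : powExp m a b -> (n <= m)%N -> powExp n a b.
Proof. rewrite /powExp; nia. Qed.

Lemma divide_by_monomials m (t : nat -> nat) (j : nat -> nat -> nat)
    (X Y : nat -> nat -> bool) f :
  (forall a b, X a b -> [/\ (j a b < m)%N, (0 < a)%N, (t (j a b) <= b)%N &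
                           Y a.-1 (b - t (j a b))%N]) ->
  supported f X ->
  exists c : nat -> ps K, (forall k, supported (c k) Y) /\
    f = psum m (fun k => psmul (c k) (XY K (t k))).
Proof.
move=> Hj Sf.
exists (fun k a' b' => if j a'.+1 (b' + t k)%N == k then f a'.+1 (b' + t k)%N else 0).
split.
  move=> k a' b'; case: ifP => [/eqP E|_]; last by rewrite eqxx.
  by move/Sf/Hj => [_ _ _]; rewrite E addnK.
apply: functional_extensionality => a; apply: functional_extensionality => b.
rewrite coef_psum; have [f0|fn0] := eqVneq (f a b) 0.
  rewrite f0 big1 // => k _; rewrite psmul_XY.
  case: ifP => // /andP [a0 tb]; rewrite prednK // subnK //.
  by case: ifP => //; rewrite f0.
have [jm a0 tb _] := Hj a b (Sf a b fn0).
transitivity (\sum_(k < m) (if k == j a b :> nat then f a b else 0)).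
  by rewrite (sum_delta m (j a b) (fun _ => f a b)) jm.
apply: eq_bigr => k _; rewrite psmul_XY.
case: eqP => [->|jk]; first by rewrite a0 tb /= prednK // subnK // eqxx.
case: ifP => // /andP [a0' tb']; rewrite prednK // subnK //.
by case: eqP => // E; case: jk.
Qed.

Lemma genA_supported m (t : nat -> nat) (j : nat -> nat -> nat)
    (X : nat -> nat -> bool) f :
  (forall k a b, (k < m)%N -> inCone a b -> X (a + 1)%N (b + t k)%N) ->
  (forall a b, X a b -> [/\ (j a b < m)%N, (0 < a)%N, (t (j a b) <= b)%N &
                           inCone a.-1 (b - t (j a b))%N]) ->
  genA s m (fun k => XY K (t k)) f <-> supported f X.
Proof.
move=> Xgen Hj; split.
  move=> [c [Hc ->]]; apply: supported_psum => k km.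
  apply: (supported_psmul (proj1 (inA_supported _) (Hc k)) (@supported_XY K (t k))).
  by move=> a1 b1 a2 b2 Cab /andP [/eqP -> /eqP ->]; apply: Xgen.
move=> Sf; have [c [Sc ->]] := divide_by_monomials Hj Sf.
by exists c; split => // k; apply/inA_supported.
Qed.

Lemma prodI_sym (P R : ps K -> Prop) f : prodI P R f -> prodI R P f.
Proof.
move=> [n [x [y [Hxy ->]]]]; exists n, y, x; split.
  by move=> k kn; have [] := Hxy k kn.
by congr psum; apply: functional_extensionality => k; apply: psmulC.
Qed.

Lemma prodI_supported (P R : ps K -> Prop) (XP XR X : nat -> nat -> bool)
    m (t : nat -> nat) (j : nat -> nat -> nat) f :
  (forall g, P g <-> supported g XP) -> (forall g, R g <-> supported g XR) ->
  (forall a1 b1 a2 b2, XP a1 b1 -> XR a2 b2 -> X (a1 + a2)%N (b1 + b2)%N) ->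
  (forall k, (k < m)%N -> supported (XY K (t k)) XR) ->
  (forall a b, X a b -> [/\ (j a b < m)%N, (0 < a)%N, (t (j a b) <= b)%N &
                           XP a.-1 (b - t (j a b))%N]) ->
  prodI P R f <-> supported f X.
Proof.
move=> HP HR X_PR gensR Hj; split.
  move=> [n [x [y [Hxy ->]]]]; apply: supported_psum => k kn.
  by have [/HP Sx /HR Sy] := Hxy k kn; apply: supported_psmul Sx Sy X_PR.
move=> Sf; have [c [Sc E]] := divide_by_monomials Hj Sf.
exists m, c, (fun k => XY K (t k)); split => // k km.
by split; [apply/HP | apply/HR; apply: gensR].
Qed.

(* Generators of I and of Q, and the index of a generator dividing a given
   monomial of I^(n+1) (resp. of Q I^n). *)
Definition tI (k : nat) : nat := if (k <= s)%N then k else (2 * s + 1)%N.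
Definition jI (a b : nat) : nat :=
  if (b <= s)%N then b else if (b <= 2 * s)%N then s else s.+1.
Definition tQ (k : nat) : nat := if k == 0%N then 0%N else (2 * s + 1)%N.
Definition jQ (a b : nat) : nat := if (2 * s + 1 <= b)%N then 1%N else 0%N.

Lemma Igens_tI : Igens K s = fun k => XY K (tI k).
Proof. by apply: functional_extensionality => k; rewrite /Igens /tI; case: ifP. Qed.
Lemma Qgens_tQ : Qgens K s = fun k => XY K (tQ k).
Proof. by apply: functional_extensionality => k; rewrite /Qgens /tQ; case: ifP. Qed.

Lemma tI_jI a b :
  tI (jI a b) = if (b <= s)%N then b else if (b <= 2 * s)%N then s else (2 * s + 1)%N.
Proof. by rewrite /tI /jI; repeat case: ifP; lia. Qed.

Lemma tQ_jQ a b : tQ (jQ a b) = if (2 * s + 1 <= b)%N then (2 * s + 1)%N else 0%N.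
Proof. by rewrite /tQ /jQ; repeat case: ifP; lia. Qed.

Lemma I_supported f : Iid K s f <-> supported f (powExp 1).
Proof.
rewrite /Iid Igens_tI; apply: (genA_supported (j := jI)).
  by move=> k a b km; rewrite /inCone /powExp /tI; case: ifP; nia.
by move=> a b; rewrite tI_jI /powExp /inCone /jI => H; split; repeat case: ifP; nia.
Qed.

Lemma Q_supported f : Qid K s f <-> supported f QExp.
Proof.
rewrite /Qid Qgens_tQ; apply: (genA_supported (j := jQ)).
  by move=> k a b km; rewrite /inCone /QExp /tQ; case: ifP; nia.
by move=> a b; rewrite tQ_jQ /QExp /inCone /jQ => H; split; repeat case: ifP; nia.
Qed.

Lemma supported_XY_tI k : supported (XY K (tI k)) (powExp 1).
Proof.
by apply: supported_sub (@supported_XY K _) _ => a b /andP [/eqP -> /eqP ->];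
  rewrite /powExp /tI; case: ifP; nia.
Qed.

Lemma supported_XY_tQ k : supported (XY K (tQ k)) QExp.
Proof.
by apply: supported_sub (@supported_XY K _) _ => a b /andP [/eqP -> /eqP ->];
  rewrite /QExp /tQ; case: ifP; nia.
Qed.

Lemma powI_supported n f : powI s (Iid K s) n f <-> supported f (powExp n).
Proof.
elim: n f => [|n IH] f /=.
  by rewrite inA_supported; split => Sf; apply: supported_sub Sf _ => a b; rewrite powExp0.
apply: (prodI_supported (t := tI) (j := jI) (m := s.+2) f IH I_supported).
- by move=> a1 b1 a2 b2 H1 H2; rewrite -addn1; apply: powExpD.
- by move=> k _; apply: supported_XY_tI.
- by move=> a b; rewrite tI_jI /powExp /jI => H; split; repeat case: ifP; nia.
Qed.

Lemma QI_supported f : prodI (Qid K s) (Iid K s) f <-> supported f QIExp.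
Proof.
suff char : prodI (Iid K s) (Qid K s) f <-> supported f QIExp.
  by split => [/prodI_sym/char | /char/prodI_sym].
apply: (prodI_supported (t := tQ) (j := jQ) (m := 2%N) f I_supported Q_supported).
- by move=> a1 b1 a2 b2; rewrite /QExp /powExp /QIExp; nia.
- by move=> k _; apply: supported_XY_tQ.
- by move=> a b; rewrite tQ_jQ /QIExp /powExp /jQ => H; split; repeat case: ifP; nia.
Qed.

Lemma QI2_supported f :
  prodI (Qid K s) (powI s (Iid K s) 2) f <-> supported f (powExp 3).
Proof.
suff char : prodI (powI s (Iid K s) 2) (Qid K s) f <-> supported f (powExp 3).
  by split => [/prodI_sym/char | /char/prodI_sym].
apply: (prodI_supported (t := tQ) (j := jQ) (m := 2%N) f (@powI_supported 2) Q_supported).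
- by move=> a1 b1 a2 b2; rewrite /QExp /powExp; nia.
- by move=> k _; apply: supported_XY_tQ.
- by move=> a b; rewrite tQ_jQ /powExp /jQ => H; split; repeat case: ifP; nia.
Qed.

Lemma I2_sub_Q f : powI s (Iid K s) 2 f -> Qid K s f.
Proof.
move=> /powI_supported If; apply/Q_supported; apply: supported_sub If _ => a b.
by rewrite /powExp /QExp; nia.
Qed.

Lemma I3_QI2 f : powI s (Iid K s) 3 f <-> prodI (Qid K s) (powI s (Iid K s) 2) f.
Proof. by split => [/powI_supported/QI2_supported | /QI2_supported/powI_supported]. Qed.

End MonomialIdeals.

Section Constants.
Variable K : fieldType.
Variable s : nat.

Definition cst (c : K) : ps K := fun a b => if (a == 0%N) && (b == 0%N) then c else 0.

Lemma psmul_cst c (f : ps K) a b : psmul (cst c) f a b = c * f a b.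
Proof.
rewrite /psmul big_ord_recl [X in _ + X]big1 ?addr0; last first.
  by move=> i _; apply: big1 => j _; rewrite /cst /= mul0r.
rewrite big_ord_recl [X in _ + X]big1 ?addr0; last by move=> j _; rewrite /cst /= mul0r.
by rewrite /cst /= !subn0.
Qed.

Lemma cst_inA c : inA s (cst c).
Proof.
apply/inA_supported => a b; rewrite /cst.
by case: ifP => [/andP [/eqP -> /eqP ->] _ | _]; rewrite ?eqxx // /inCone.
Qed.

Lemma cst0 : cst 0 = @ps0 K.
Proof.
by apply: functional_extensionality => a; apply: functional_extensionality => b;
  rewrite /cst /ps0; case: ifP.
Qed.

Lemma ideal_big (J : ps K -> Prop) (T : Type) (r : seq T) (P : pred T) (F : T -> ps K) :
  isIdealA s J -> (forall i, P i -> J (F i)) -> J (\big[@psadd K/@ps0 K]_(i <- r | P i) F i).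
Proof. by move=> [_ [J0 [JD _]]] JF; apply: (big_ind J J0 JD JF). Qed.

Lemma ideal_scale (J : ps K -> Prop) c f : isIdealA s J -> J f -> J (psmul (cst c) f).
Proof. by move=> [_ [_ [_ JM]]]; apply: JM; apply: cst_inA. Qed.

End Constants.

Section MonomialLength.
Variable K : fieldType.
Variable s : nat.
Implicit Types f g h : ps K.

(* Then ell_A(N/M) = #D: adding the monomials of D one by one gives
   a composition series, and any strict chain has at most #D steps since its
   successive witnesses are linearly independent modulo M on the coordinates D. *)
Definition ordered (D : seq (nat * nat)) :=
  forall p q, p \in D -> q \in D -> (p.1 < q.1)%N -> (index q D < index p D)%N.

Variables (M N : ps K -> Prop) (XM XN : nat -> nat -> bool) (D : seq (nat * nat)).
Hypothesis M_supp : forall f, M f <-> supported f XM.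
Hypothesis N_supp : forall f, N f <-> supported f XN.
Hypothesis XN_cone : forall a b, XN a b -> inCone s a b.
Hypothesis XM_XN : forall a b, XM a b -> XN a b.
Hypothesis XM_stable :
  forall a b a' b', XM a b -> inCone s a' b' -> XM (a + a')%N (b + b')%N.
Hypothesis XN_stable :
  forall a b a' b', XN a b -> inCone s a' b' -> XN (a + a')%N (b + b')%N.
Hypothesis D_uniq : uniq D.
Hypothesis D_mem : forall p, (p \in D) = XN p.1 p.2 && ~~ XM p.1 p.2.
Hypothesis D_ordered : ordered D.

Definition stepExp (k a b : nat) : bool := XM a b || ((a, b) \in take k D).
Definition stepIdeal (k : nat) f : Prop := supported f (stepExp k).

(* Each step is an ideal: multiplying a monomial of D by a nonconstant monomial
   of A raises the X-degree, so lands in M or earlier in D. *)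
Lemma stepExp_stable k a1 b1 a2 b2 :
  inCone s a1 b1 -> stepExp k a2 b2 -> stepExp k (a1 + a2)%N (b1 + b2)%N.
Proof.
move=> C12 /orP [XM2|D2]; first by rewrite /stepExp addnC (addnC b1) XM_stable.
have [a1_0|a1_pos] := posnP a1.
  by move: C12; rewrite /inCone a1_0 muln0 leqn0 => /eqP ->; rewrite /stepExp D2 orbT.
have D2' := mem_take D2; move: (D2'); rewrite D_mem => /andP [XN2 _].
case XM12: (XM (a1 + a2)%N (b1 + b2)%N); first by rewrite /stepExp XM12.
have D12 : ((a1 + a2)%N, (b1 + b2)%N) \in D.
  by rewrite D_mem /= XM12 addnC (addnC b1) XN_stable.
rewrite /stepExp XM12 /=; move: D2; rewrite !in_take //.
by have := D_ordered D2' D12 ltac:(rewrite /=; lia); lia.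
Qed.

Lemma stepIdeal_ideal k : isIdealA s (stepIdeal k).
Proof.
split.
  move=> f Sf; apply/inA_supported; apply: supported_sub Sf _ => a b /orP [/XM_XN/XN_cone //|].
  by move/mem_take; rewrite D_mem => /andP [/XN_cone].
split; first exact: supported_ps0.
split; first by move=> f g; apply: supported_psadd.
move=> a f /inA_supported Sa Sf; apply: supported_psmul Sa Sf _.
exact: stepExp_stable.
Qed.

Lemma composition_series : exists J, chainA s M N (size D) J.
Proof.
exists stepIdeal; split.
  move=> f; rewrite /stepIdeal /stepExp take0 M_supp.
  by split => Sf; apply: supported_sub Sf _ => a b; rewrite in_nil orbF.
split.
  move=> f; rewrite /stepIdeal /stepExp take_size N_supp.
  split => Sf; apply: supported_sub Sf _ => a b.
    by case/orP => [/XM_XN // | ]; rewrite D_mem => /andP [].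
  by move=> XNab; rewrite /stepExp D_mem /= XNab; case: (XM a b).
split; first by move=> k _; apply: stepIdeal_ideal.
move=> k kD; split.
  move=> f Sf; apply: supported_sub Sf _ => a b /orP [XMab|Dk]; first by rewrite /stepExp XMab.
  rewrite /stepExp; apply/orP; right.
  by have abD := mem_take Dk; move: Dk; rewrite !in_take //; lia.
pose p := nth (0%N, 0%N) D k.
have pD : p \in D by rewrite mem_nth.
have ip : index p D = k by rewrite index_uniq.
exists (fun a b => if (a == p.1) && (b == p.2) then 1 else 0); split.
  move=> a b; case: ifP => [/andP [/eqP -> /eqP ->] _ | ]; last by rewrite eqxx.
  by rewrite /stepExp -surjective_pairing in_take // ip leqnn orbT.
move=> /(_ p.1 p.2); rewrite !eqxx oner_neq0 => /(_ isT).
rewrite /stepExp -surjective_pairing in_take // ip ltnn orbF.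
by move: pD; rewrite D_mem => /andP [_ /negbTE ->].
Qed.

Section ChainBound.
Variables (m : nat) (J : nat -> ps K -> Prop).
Hypothesis J_chain : chainA s M N m J.

Lemma chain_nested k t f : (k <= t <= m)%N -> J k f -> J t f.
Proof.
case: J_chain => _ [_ [_ J_strict]] /andP [].
elim: t => [|t IH] kt tm Jkf; first by move: kt; rewrite leqn0 => /eqP <-.
have [kt'|tk] := leqP k t; last by have -> : t.+1 = k by lia.
by apply: (J_strict t tm).1; apply: IH => //; apply: ltnW.
Qed.

Lemma chain_ideal k : (k <= m)%N -> isIdealA s (J k).
Proof. by case: J_chain => _ [_ [J_id _]]; apply: J_id. Qed.

Lemma chain_top_supported t f : (t <= m)%N -> J t f -> supported f XN.
Proof.
case: J_chain => _ [Jm _] tm Jtf; apply/N_supp/Jm.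
by apply: (@chain_nested t); rewrite ?tm ?leqnn.
Qed.

Lemma chain_bottom t f : (t <= m)%N -> supported f XM -> J t f.
Proof.
case: J_chain => J0 _ tm Sf; apply: (@chain_nested 0%N); first by rewrite tm.
by apply/J0/M_supp.
Qed.

Lemma chain_witness_ex k : exists x, (k < m)%N -> J k.+1 x /\ ~ J k x.
Proof.
have [km|] := ltnP k m; last by exists (@ps0 K).
by case: J_chain => _ [_ [_ /(_ k km) [_ [x Jx]]]]; exists x.
Qed.

Definition witness (k : nat) : ps K :=
  proj1_sig (constructive_indefinite_description _ (chain_witness_ex k)).

Lemma witnessP k : (k < m)%N -> J k.+1 (witness k) /\ ~ J k (witness k).
Proof. exact: (proj2_sig (constructive_indefinite_description _ (chain_witness_ex k))). Qed.

Definition lincomb (u : 'I_m -> K) : ps K :=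
  \big[@psadd K/@ps0 K]_(k < m) psmul (cst (u k)) (witness k).

Lemma coef_lincomb u a b : lincomb u a b = \sum_(k < m) u k * witness k a b.
Proof. by rewrite /lincomb coef_bigps; apply: eq_bigr => k _; rewrite psmul_cst. Qed.

Lemma lincomb_chain t u : (t <= m)%N -> (forall k : 'I_m, (t <= k)%N -> u k = 0) ->
  J t (lincomb u).
Proof.
move=> tm u0; apply: (ideal_big _ (chain_ideal tm)) => k _.
have [kt|tk] := ltnP k t.
  apply: ideal_scale (chain_ideal tm) _.
  by apply: (@chain_nested k.+1); [rewrite kt tm | apply: (witnessP (ltn_ord k)).1].
by rewrite u0 // cst0 psmul0l; case: (chain_ideal tm) => _ [].
Qed.

Definition witness_matrix : 'M[K]_(m, size D) :=
  \matrix_(k < m, i < size D) witness k (nth (0%N, 0%N) D i).1 (nth (0%N, 0%N) D i).2.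

(* Key step: a combination of the first t+1 witnesses that vanishes on D lies
   in M, hence in J t; as J t contains the first t witnesses, the coefficient
   of the (t+1)-th witness must vanish. *)
Lemma witness_rows_free_upto t : (t <= m)%N -> forall u : 'rV[K]_m,
  (forall k : 'I_m, (t <= k)%N -> u 0 k = 0) -> u *m witness_matrix = 0 -> u = 0.
Proof.
elim: t => [|t IH] tm u u0 uA0.
  by apply/matrixP => i k; rewrite [i]ord1 u0 // mxE.
apply: (IH (ltnW tm) u _ uA0) => k tk.
have [kt|kt] := eqVneq (k : nat) t; last by apply: u0; lia.
apply/eqP; apply: contraT => ut_neq0; exfalso; apply: (witnessP tm).2.
pose g := lincomb (fun i => u 0 i).
pose h := lincomb (fun i => if (i < t)%N then u 0 i else 0).
have gM : supported g XM.
  move=> a b gab; have := chain_top_supported tm (lincomb_chain tm u0) gab.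
  case XMab: (XM a b) => // XNab; case/eqP: gab.
  have abD : (a, b) \in D by rewrite D_mem /= XNab XMab.
  have iD : (index (a, b) D < size D)%N by rewrite index_mem.
  have := congr1 (fun B : 'M[K]_(1, size D) => B 0 (Ordinal iD)) uA0.
  rewrite !mxE => E; rewrite /g coef_lincomb -{}[RHS]E.
  by apply: eq_bigr => i _; rewrite mxE /= nth_index.
have gJ : J t g := chain_bottom (ltnW tm) gM.
have hJ : J t h by apply: lincomb_chain (ltnW tm) _ => i; case: ltnP.
have -> : witness t = psmul (cst (u 0 k)^-1) (psadd g (psmul (cst (-1)) h)).
  apply: functional_extensionality => a; apply: functional_extensionality => b.
  rewrite psmul_cst /psadd psmul_cst /g /h !coef_lincomb mulN1r -sumrB.
  rewrite (eq_bigr (fun i : 'I_m => if i == t :> nat then u 0 k * witness t a b else 0)).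
    by rewrite (sum_delta m t (fun=> u 0 k * witness t a b)) tm mulrA mulVf ?mul1r.
  move=> i _; case: ltngtP => it; rewrite ?subrr //.
    by rewrite u0 ?mul0r ?subr0 //; lia.
  have ik : i = k by apply: val_inj; rewrite /= it kt.
  by rewrite ik mul0r subr0 kt.
have Jt := chain_ideal (ltnW tm); apply: (ideal_scale _ Jt).
case: (Jt) => _ [_ [JD _]]; apply: JD gJ _.
exact: (ideal_scale _ Jt hJ).
Qed.

(* The witness matrix has a trivial left kernel, so m <= rank <= #D. *)
Lemma chain_length_le : (m <= size D)%N.
Proof.
have kerA0 : kermx witness_matrix == 0.
  rewrite -submx0; apply/row_subP => i.
  have : row i (kermx witness_matrix) *m witness_matrix = 0.
    by apply/sub_kermxP; apply: row_sub.
  move/(witness_rows_free_upto (leqnn m)) => -> //; first exact: sub0mx.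
  by move=> k mk; move: (ltn_ord k); lia.
by move: kerA0; rewrite kermx_eq0 /row_free => /eqP <-; apply: rank_leq_col.
Qed.

End ChainBound.

Lemma lenA_monomial : lenA s M N (size D).
Proof.
split; first exact: composition_series.
by move=> m J; apply: chain_length_le.
Qed.

End MonomialLength.

Section Lengths.
Variable K : fieldType.
Variable s : nat.

Lemma ordered_const c (D : seq (nat * nat)) : (forall p, p \in D -> p.1 = c) -> ordered D.
Proof. by move=> D_c p q /D_c -> /D_c ->; rewrite ltnn. Qed.

Lemma ordered_cat D1 D2 : ordered D1 -> ordered D2 ->
  (forall p q, p \in D1 -> q \in D2 -> (q.1 < p.1)%N) -> ordered (D1 ++ D2).
Proof.
move=> D1o D2o D12 p q; rewrite !mem_cat !index_cat => pD qD pq.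
case qD1: (q \in D1); case pD1: (p \in D1).
- exact: D1o.
- by have := index_mem q D1; rewrite qD1; lia.
- by move: qD; rewrite qD1 /= => qD2; have := D12 p q pD1 qD2; lia.
- by move: pD qD; rewrite pD1 qD1 /= => pD2 qD2; have := D2o p q pD2 qD2 pq; lia.
Qed.

Definition gapI2 : seq (nat * nat) := [seq (2%N, (s.+1 + i)%N) | i <- iota 0 s].

Lemma lenA_I2_QI : lenA s (prodI (Qid K s) (Iid K s)) (powI s (Iid K s) 2) s.
Proof.
have gap_size : size gapI2 = s by rewrite size_map size_iota.
rewrite -[X in lenA _ _ _ X]gap_size.
apply: (lenA_monomial (XM := QIExp s) (XN := powExp s 2)).
- exact: QI_supported.
- exact: powI_supported.
- exact: powExp_cone.
- by rewrite /QIExp /powExp; nia.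
- by rewrite /QIExp /inCone; nia.
- by move=> a b a' b' Iab Cab; rewrite -(addn0 2%N); apply: powExpD; rewrite ?powExp0.
- by rewrite map_inj_uniq ?iota_uniq // => i j [] ?; lia.
- case=> a b /=; apply/idP/idP.
    by move/mapP => [i]; rewrite mem_iota => ? [-> ->]; rewrite /powExp /QIExp; nia.
  rewrite /powExp /QIExp => ab; apply/mapP; exists (b - s.+1)%N; first by rewrite mem_iota; nia.
  by congr pair; nia.
- by apply: (ordered_const (c := 2%N)) => p /mapP [i _ ->].
Qed.

Fixpoint coneUpTo (a : nat) : seq (nat * nat) :=
  if a is a'.+1 then [seq (a, b) | b <- iota 0 ((2 * s + 1) * a).+1] ++ coneUpTo a'
  else [:: (0%N, 0%N)].

Lemma coneUpToS a :
  coneUpTo a.+1 = [seq (a.+1, b) | b <- iota 0 ((2 * s + 1) * a.+1).+1] ++ coneUpTo a.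
Proof. by []. Qed.

Lemma mem_coneUpTo a p : (p \in coneUpTo a) = (p.1 <= a)%N && inCone s p.1 p.2.
Proof.
case: p => x y /=; rewrite /inCone; elim: a => [|a IH].
  rewrite inE; apply/idP/idP => [/eqP [-> ->] //|/andP [? ?]].
  by apply/eqP; congr pair; nia.
rewrite coneUpToS mem_cat IH; apply/idP/idP.
  by case/orP => [/mapP [b]|]; [rewrite mem_iota => ? [-> ->] | ]; nia.
have [->|xa] := eqVneq x a.+1 => H.
  by apply/orP; left; apply/mapP; exists y => //; rewrite mem_iota; nia.
by apply/orP; right; nia.
Qed.

Lemma uniq_coneUpTo a : uniq (coneUpTo a).
Proof.
elim: a => [|a IH] //; rewrite coneUpToS cat_uniq IH andbT.
apply/andP; split; first by rewrite map_inj_uniq ?iota_uniq // => i j [].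
apply/hasPn => p; rewrite mem_coneUpTo => /andP [pa _].
by apply/negP => /mapP [b _ Ep]; move: pa; rewrite Ep /=; lia.
Qed.

Lemma ordered_coneUpTo a : ordered (coneUpTo a).
Proof.
elim: a => [|a IH].
  by apply: (ordered_const (c := 0%N)) => p; rewrite inE => /eqP ->.
rewrite coneUpToS; apply: ordered_cat => //.
  by apply: (ordered_const (c := a.+1)) => p /mapP [b _ ->].
by move=> p q /mapP [b _ ->]; rewrite mem_coneUpTo /= => /andP [qa _]; lia.
Qed.

Lemma size_coneUpTo a :
  (size (coneUpTo a) + s + 2 * s * a.+1 = (2 * s + 1) * 'C(a.+2, 2) + s)%N.
Proof.
elim: a => [|a IH]; first by rewrite /= binn; lia.
by rewrite coneUpToS size_cat size_map size_iota binS bin1; lia.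
Qed.

Definition basisModPow (n : nat) : seq (nat * nat) :=
  [seq (n.+1, ((2 * s + 1) * n.+1 - s + i)%N) | i <- iota 0 s] ++ coneUpTo n.

Lemma lenA_A_Ipow n : lenA s (powI s (Iid K s) n.+1) (inA s)
  ((2 * s + 1) * 'C(n.+2, 2) - 2 * s * 'C(n.+1, 1) + s)%N.
Proof.
have -> : ((2 * s + 1) * 'C(n.+2, 2) - 2 * s * 'C(n.+1, 1) + s)%N = size (basisModPow n).
  by rewrite size_cat size_map size_iota bin1; have := size_coneUpTo n; lia.
apply: (lenA_monomial (XM := powExp s n.+1) (XN := inCone s)).
- exact: powI_supported.
- exact: inA_supported.
- by [].
- exact: powExp_cone.
- by move=> a b a' b' Iab Cab; rewrite -(addn0 n.+1); apply: powExpD; rewrite ?powExp0.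
- by rewrite /inCone; nia.
- rewrite cat_uniq uniq_coneUpTo andbT; apply/andP; split.
    by rewrite map_inj_uniq ?iota_uniq // => i j [] ?; lia.
  apply/hasPn => p; rewrite mem_coneUpTo => /andP [pn _].
  by apply/negP => /mapP [b _ Ep]; move: pn; rewrite Ep /=; lia.
- case=> a b; rewrite mem_cat mem_coneUpTo /=; apply/idP/idP.
    by case/orP => [/mapP [i]|]; [rewrite mem_iota => ? [-> ->] | ]; rewrite /inCone /powExp; nia.
  rewrite /inCone /powExp => ab; have [an|na] := leqP a n; first by apply/orP; right; nia.
  apply/orP; left; apply/mapP; exists (b - ((2 * s + 1) * n.+1 - s))%N.
    by rewrite mem_iota; nia.
  by congr pair; nia.
- apply: ordered_cat.
  + by apply: (ordered_const (c := n.+1)) => p /mapP [b _ ->].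
  + exact: ordered_coneUpTo.
  + by move=> p q /mapP [b _ ->]; rewrite mem_coneUpTo /= => /andP [qn _]; lia.
Qed.

End Lengths.

Section GradedArithmetic.
Variable K : fieldType.
Implicit Types g h : grr K.

Lemma coef_gsum n (F : nat -> grr K) m a b : gsum n F m a b = \sum_(k < n) F k m a b.
Proof. by rewrite /gsum (big_morph (fun f : grr K => f m a b) (id1 := 0) (op1 := +%R)). Qed.

Lemma coef_gmul g h n a b : gmul g h n a b = \sum_(i < n.+1) psmul (g i) (h (n - i)%N) a b.
Proof. by rewrite /gmul coef_bigps. Qed.

(* As for psmul, the laws of gmul are transferred from trivariate polynomials. *)
Definition grr_of_poly (p : {poly {poly {poly K}}}) : grr K := fun n a b => p`_n`_a`_b.
Definition truncate3 (N : nat) g : {poly {poly {poly K}}} :=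
  \poly_(n < N) \poly_(a < N) \poly_(b < N) g n a b.

Lemma grr_of_truncate N g n a b :
  (n < N)%N -> (a < N)%N -> (b < N)%N -> grr_of_poly (truncate3 N g) n a b = g n a b.
Proof.
by move=> nN aN bN; rewrite /grr_of_poly /truncate3 coef_poly nN coef_poly aN coef_poly bN.
Qed.

Lemma gmul_poly p q : gmul (grr_of_poly p) (grr_of_poly q) = grr_of_poly (p * q).
Proof.
apply: functional_extensionality => n; apply: functional_extensionality => a.
apply: functional_extensionality => b.
rewrite coef_gmul /grr_of_poly coefM !coef_sum; apply: eq_bigr => i _.
by rewrite -[RHS]/(ps_of_poly (p`_i * q`_(n - i)) a b) -psmul_poly.
Qed.

Lemma gmul_local g h g' h' n a b :
  (forall i a' b', (i <= n)%N -> (a' <= a)%N -> (b' <= b)%N ->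
     g i a' b' = g' i a' b' /\ h i a' b' = h' i a' b') ->
  gmul g h n a b = gmul g' h' n a b.
Proof.
move=> E; rewrite !coef_gmul; apply: eq_bigr => i _; apply: psmul_local => a' b' a'a b'b.
have := ltn_ord i => ilt.
by split; [apply: (E i a' b' _ _ _).1 | apply: (E (n - i)%N a' b' _ _ _).2]; lia.
Qed.

Lemma gmul_truncate g h N n a b : (n < N)%N -> (a < N)%N -> (b < N)%N ->
  gmul g h n a b = gmul (grr_of_poly (truncate3 N g)) (grr_of_poly (truncate3 N h)) n a b.
Proof.
by move=> nN aN bN; apply: gmul_local => i a' b' ? ? ?; rewrite !grr_of_truncate //; lia.
Qed.

Lemma gmulC g h : gmul g h = gmul h g.
Proof.
apply: functional_extensionality => n; apply: functional_extensionality => a.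
apply: functional_extensionality => b; pose N := (maxn n (maxn a b)).+1.
rewrite (@gmul_truncate _ _ N) 1?[RHS](@gmul_truncate _ _ N); try lia.
by rewrite !gmul_poly mulrC.
Qed.

Lemma gmulA g h k : gmul g (gmul h k) = gmul (gmul g h) k.
Proof.
apply: functional_extensionality => n; apply: functional_extensionality => a.
apply: functional_extensionality => b; pose N := (maxn n (maxn a b)).+1.
pose tr u := grr_of_poly (truncate3 N u).
have trE u i a' b' : (i <= n)%N -> (a' <= a)%N -> (b' <= b)%N -> tr u i a' b' = u i a' b'.
  by move=> ? ? ?; rewrite /tr grr_of_truncate //; lia.
rewrite (@gmul_local g (gmul h k) (tr g) (gmul (tr h) (tr k))); last first.
  by move=> i a' b' ? ? ?; rewrite trE // (@gmul_truncate h k N) //; lia.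
rewrite [RHS](@gmul_local (gmul g h) k (gmul (tr g) (tr h)) (tr k)); last first.
  by move=> i a' b' ? ? ?; rewrite trE // (@gmul_truncate g h N) //; lia.
by rewrite !gmul_poly mulrA.
Qed.

Lemma gmulCA g h k : gmul g (gmul h k) = gmul h (gmul g k).
Proof. by rewrite gmulA (gmulC g) -gmulA. Qed.

Definition gsub g h : grr K := fun n => psadd (g n) (psopp (h n)).

Lemma coef_gmul_gsub x g h n a b :
  gmul x (gsub g h) n a b = gmul x g n a b - gmul x h n a b.
Proof.
rewrite !coef_gmul -sumrB; apply: eq_bigr => i _.
by rewrite /gsub psmulDr psmulNr.
Qed.

End GradedArithmetic.

Section GradedRing.
Variable K : fieldType.
Variable s : nat.
Implicit Types g h x y z : grr K.
Notation I := (Iid K s).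

Definition gradedSupported g := forall n, supported (g n) (powExp s n).

Definition gEq g h := forall n a b, ~~ powExp s n.+1 a b -> g n a b = h n a b.

Lemma Gel_supported g : Gel s I g <->
  gradedSupported g /\ exists N, forall n, (N <= n)%N -> supported (g n) (powExp s n.+1).
Proof.
split; move=> [Sg [N SgN]]; (split; first by move=> n; apply/powI_supported);
  by exists N => n Nn; apply/powI_supported; apply: SgN.
Qed.

Lemma Gel_graded g : Gel s I g -> gradedSupported g.
Proof. by case/Gel_supported. Qed.

Lemma geq_gEq g h : Defs.geq s I g h <-> gEq g h.
Proof.
split; last by move=> E n; apply/powI_supported; apply: supported_diff (E n).
move=> E n a b Iab; have := proj1 (powI_supported _ _ _) (E n) a b.
rewrite /psadd /psopp => Sdiff; apply/eqP; rewrite -subr_eq0.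
by apply: contraR Iab => /Sdiff.
Qed.

Lemma gEq_sym g h : gEq g h -> gEq h g.
Proof. by move=> E n a b /E ->. Qed.

Lemma gEq_trans g h k : gEq g h -> gEq h k -> gEq g k.
Proof. by move=> E1 E2 n a b Iab; rewrite E1 ?E2. Qed.

Lemma supported_gmul g h n t :
  (forall i, (i <= n)%N -> exists p q, (t <= p + q)%N /\
     supported (g i) (powExp s p) /\ supported (h (n - i)%N) (powExp s q)) ->
  supported (gmul g h n) (powExp s t).
Proof.
move=> pq a b; rewrite coef_gmul => /sum_neq0 [i gh_i].
have [p [q [tpq [Sg Sh]]]] := pq i ltac:(have := ltn_ord i; lia).
have := supported_psmul Sg Sh (fun _ _ _ _ => @powExpD s p q _ _ _ _) gh_i.
by move/powExp_mono; apply.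
Qed.

Lemma gradedSupported_gmul g h :
  gradedSupported g -> gradedSupported h -> gradedSupported (gmul g h).
Proof.
move=> Sg Sh n; apply: supported_gmul => i i_n.
by exists i, (n - i)%N; split; [lia | split; [apply: Sg | apply: Sh]].
Qed.

Lemma Gel_gmul g h : Gel s I g -> Gel s I h -> Gel s I (gmul g h).
Proof.
move=> /Gel_supported [Sg [Ng SgN]] /Gel_supported [Sh [Nh ShN]].
apply/Gel_supported; split; first exact: gradedSupported_gmul.
exists (Ng + Nh)%N => n Nn; apply: supported_gmul => i i_n.
have [Ngi|iNg] := leqP Ng i.
  by exists i.+1, (n - i)%N; split; [lia | split; [apply: SgN | apply: Sh]].
by exists i, (n - i).+1; split; [lia | split; [apply: Sg | apply: ShN; lia]].
Qed.

Lemma Gel_pointwise g h k : Gel s I g -> Gel s I h ->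
  (forall n X, supported (g n) X -> supported (h n) X -> supported (k n) X) ->
  Gel s I k.
Proof.
move=> /Gel_supported [Sg [Ng SgN]] /Gel_supported [Sh [Nh ShN]] Sk.
apply/Gel_supported; split; first by move=> n; apply: Sk; [apply: Sg | apply: Sh].
by exists (Ng + Nh)%N => n Nn; apply: Sk; [apply: SgN | apply: ShN]; lia.
Qed.

Lemma Gel_gadd g h : Gel s I g -> Gel s I h -> Gel s I (gadd g h).
Proof. by move=> Gg Gh; apply: Gel_pointwise Gg Gh _ => n X; apply: supported_psadd. Qed.

Lemma Gel_gsub g h : Gel s I g -> Gel s I h -> Gel s I (gsub g h).
Proof.
move=> Gg Gh; apply: Gel_pointwise Gg Gh _ => n X Sg Sh.
by apply: supported_psadd Sg (supported_psopp Sh).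
Qed.

Lemma Gel_gzero : Gel s I (gzero K).
Proof. by apply/Gel_supported; split => [n|]; last exists 0%N => n _; apply: supported_ps0. Qed.

Definition homog (d : nat) (F : ps K) : grr K := fun n => if n == d then F else @ps0 K.

Lemma Gel_homog d F : supported F (powExp s d) -> Gel s I (homog d F).
Proof.
move=> SF; apply/Gel_supported; split.
  by move=> n; rewrite /homog; case: eqP => [->|_] //; apply: supported_ps0.
exists d.+1 => n dn; rewrite /homog; case: eqP => [nd|_]; first lia.
exact: supported_ps0.
Qed.

Lemma Gel_homog_XY d t : powExp s d 1 t -> Gel s I (homog d (XY K t)).
Proof.
move=> dt; apply: Gel_homog => a b; rewrite /XY.
by case: ifP => [/andP [/eqP -> /eqP ->] _ | _]; rewrite ?eqxx.
Qed.

Lemma gEq_gmul x g g' : gradedSupported x -> gEq g g' -> gEq (gmul x g) (gmul x g').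
Proof.
move=> Sx E n a b Iab; apply/eqP; rewrite -subr_eq0 -coef_gmul_gsub.
apply: contraR Iab; apply: supported_gmul => i i_n.
exists i, (n - i).+1; split; first lia.
by split; [apply: Sx | apply: supported_diff (E (n - i)%N)].
Qed.

End GradedRing.

Section Depth.
Variable K : fieldType.
Variable s : nat.
Hypothesis s_gt0 : (0 < s)%N.
Implicit Types g h x y z : grr K.
Notation I := (Iid K s).

Definition fG : grr K := homog 1 (XY K (2 * s + 1)).
Definition wG : grr K := homog 0 (XY K (2 * s)).

Lemma Gel_fG : Gel s I fG.
Proof. by apply: Gel_homog_XY; rewrite /powExp; lia. Qed.

Lemma Gel_wG : Gel s I wG.
Proof. by apply: Gel_homog_XY; rewrite /powExp; lia. Qed.

Lemma coef_gmul_fG y n a b : gmul fG y n a b =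
  if [&& (0 < n)%N, (0 < a)%N & (2 * s + 1 <= b)%N]
  then y n.-1 a.-1 (b - (2 * s + 1))%N else 0.
Proof.
rewrite coef_gmul.
rewrite (eq_bigr (fun i : 'I_n.+1 => if i == 1%N :> nat
                    then psmul (XY K (2 * s + 1)) (y n.-1) a b else 0)); last first.
  by move=> i _; rewrite /fG /homog; case: eqP => [->|_]; rewrite ?subn1 ?psmul0l.
rewrite (sum_delta _ _ (fun=> psmul (XY K (2 * s + 1)) (y n.-1) a b)) psmul_XYl.
by case: n => [|n] //=; case: ((0 < a)%N && _).
Qed.

Lemma coef_gmul_wG x n a b : gmul x wG n a b =
  if (0 < a)%N && (2 * s <= b)%N then x n a.-1 (b - 2 * s)%N else 0.
Proof.
rewrite coef_gmul.
rewrite (eq_bigr (fun i : 'I_n.+1 => if i == n :> nat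
                    then psmul (x n) (XY K (2 * s)) a b else 0)); last first.
  move=> i _; have := ltn_ord i; rewrite /wG /homog.
  case: eqP => [E|NE]; case: eqP => [E2|NE2] //; try lia; first by rewrite E2.
  by rewrite psmulC psmul0l.
by rewrite (sum_delta _ _ (fun=> psmul (x n) (XY K (2 * s)) a b)) ltnSn psmul_XY.
Qed.

(* f is a nonzerodivisor of G(I): a monomial of degree n outside I^(n+1) that
   could still lie in I^(n+2) after multiplication by X Y^(2s+1) would
   contradict the shape of powExp. *)
Lemma fG_cancel y z : gradedSupported s y -> gradedSupported s z ->
  gEq s (gmul fG y) (gmul fG z) -> gEq s y z.
Proof.
move=> Sy Sz E n a b Iab.
case Ishift: (powExp s n.+2 a.+1 (b + (2 * s + 1))%N); last first.
  have := E n.+1 a.+1 (b + (2 * s + 1))%N (negbT Ishift).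
  by rewrite !coef_gmul_fG /= (_ : (2 * s + 1 <= b + (2 * s + 1))%N = true) ?addnK //; lia.
have [y0|yn0] := eqVneq (y n a b) 0; have [z0|zn0] := eqVneq (z n a b) 0.
- by rewrite y0 z0.
- by have := Sz n a b zn0; move: Iab Ishift; rewrite /powExp; nia.
- by have := Sy n a b yn0; move: Iab Ishift; rewrite /powExp; nia.
- by have := Sy n a b yn0; move: Iab Ishift; rewrite /powExp; nia.
Qed.

(* Every element x of the homogeneous maximal ideal satisfies
   x w = f (quotient_f x): w annihilates M modulo f, the obstruction to depth 2.
   quotient_f x is x shifted back by (1, 0, 1), with the terms that f pushes
   into I^(n+2) discarded. *)
Definition quotient_f x : grr K := fun m a b =>
  if powExp s m.+2 a.+1 (b + (2 * s + 1))%N then 0 else x m.+1 a b.+1.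

Lemma quotient_fP x : gradedSupported s x -> x 0%N 0%N 0%N = 0 ->
  gEq s (gmul x wG) (gmul fG (quotient_f x)).
Proof.
move=> Sx x000 n a b Iab; rewrite coef_gmul_wG coef_gmul_fG /quotient_f.
have [ab|] := boolP ((0 < a)%N && (2 * s <= b)%N); last by case: ifP => //; lia.
have [c|shift] := boolP [&& (0 < n)%N, (0 < a)%N & (2 * s + 1 <= b)%N].
  have -> : powExp s n.-1.+2 a.-1.+1 (b - (2 * s + 1) + (2 * s + 1))%N = powExp s n.+1 a b.
    by congr powExp; lia.
  by rewrite (negbTE Iab); congr x; lia.
have [//|xn0] := eqVneq (x n a.-1 (b - 2 * s)%N) 0.
have Ix := Sx n _ _ xn0.
have [n0|n_pos] := posnP n; last by exfalso; move: Ix Iab ab shift; rewrite /powExp; nia.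
move: n0 Ix Iab ab x000 xn0 => ->; rewrite /powExp => Ix Iab ab x000 xn0.
have [a1|a_pos] := posnP a.-1; last by exfalso; move: Iab; nia.
have b2s : (b - 2 * s = 0)%N by nia.
by move: xn0; rewrite a1 b2s x000 eqxx.
Qed.

Lemma Gel_quotient_f x : Gel s I x -> Gel s I (quotient_f x).
Proof.
move=> /Gel_supported [Sx [N SxN]]; apply/Gel_supported; split.
  move=> m a b; rewrite /quotient_f; case: ifP => _; first by rewrite eqxx.
  by move/Sx; rewrite /powExp; nia.
exists N => m Nm a b; rewrite /quotient_f; case: ifP => Ishift; first by rewrite eqxx.
by move/(SxN m.+1 ltac:(lia)); move: Ishift; rewrite /powExp; nia.
Qed.

Lemma genG0P (x : nat -> grr K) h : genG s I 0 x h <-> Gel s I h /\ gEq s h (gzero K).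
Proof.
split.
  move=> [Gh [c [_ /geq_gEq E]]]; split => // n a b Iab.
  by rewrite E // coef_gsum big_ord0.
move=> [Gh E]; split => //; exists (fun _ => gzero K); split => //.
by apply/geq_gEq => n a b Iab; rewrite E // coef_gsum big_ord0.
Qed.

Lemma genG1P (x : nat -> grr K) h : genG s I 1 x h <->
  Gel s I h /\ exists c, Gel s I c /\ gEq s h (gmul c (x 0%N)).
Proof.
split.
  move=> [Gh [c [Gc /geq_gEq E]]]; split => //; exists (c 0%N); split; first exact: Gc.
  by move=> n a b Iab; rewrite E // coef_gsum big_ord1.
move=> [Gh [c [Gc E]]]; split => //; exists (fun _ => c); split => //.
by apply/geq_gEq => n a b Iab; rewrite E // coef_gsum big_ord1.
Qed.

(* w is not a multiple of f in G(I): its degree 0 part X Y^(2s) is not in I. *)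
Lemma wG_notin_fG c : ~ gEq s (gsub wG (gmul fG c)) (gzero K).
Proof.
move=> /(_ 0%N 1%N (2 * s)%N) E.
have /E : ~~ powExp s 1 1 (2 * s) by rewrite /powExp; lia.
rewrite /gsub /psadd /psopp coef_gmul_fG /= /wG /homog /XY !eqxx /= subr0 => /eqP.
by rewrite oner_eq0.
Qed.

(* For x0, x1 in M, x1 (quotient_f x0) = x0 (quotient_f x1): both times f
   equal x0 x1 w, and f is a nonzerodivisor. *)
Lemma quotient_f_cross x0 x1 : Gel s I x0 -> Gel s I x1 ->
  x0 0%N 0%N 0%N = 0 -> x1 0%N 0%N 0%N = 0 ->
  gEq s (gmul x1 (quotient_f x0)) (gmul x0 (quotient_f x1)).
Proof.
move=> G0 G1 Z0 Z1; have S0 := Gel_graded G0; have S1 := Gel_graded G1.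
apply: fG_cancel; try apply: gradedSupported_gmul => //;
  try by apply/Gel_graded/Gel_quotient_f.
rewrite (gmulCA fG x1); apply: gEq_trans (gEq_gmul S1 (gEq_sym (quotient_fP S0 Z0))) _.
rewrite (gmulCA x1 x0); apply: gEq_trans (gEq_gmul S0 (quotient_fP S1 Z1)) _.
by rewrite (gmulCA x0 fG).
Qed.

Lemma no_regular_pair n (x : nat -> grr K) : regG s I n x -> (2 <= n)%N -> False.
Proof.
move=> [x_max [x_reg _]] n2.
have [G0 [_ Z0]] := x_max 0%N ltac:(lia); have [G1 [_ Z1]] := x_max 1%N ltac:(lia).
have S0 := Gel_graded G0; have Gd0 := Gel_quotient_f G0.
(* x1 (quotient_f x0) lies in (x0); x1 being regular mod x0, quotient_f x0 = c x0. *)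
have : genG s I 1 x (gmul (x 1%N) (quotient_f (x 0%N))).
  apply/genG1P; split; first exact: Gel_gmul.
  exists (quotient_f (x 1%N)); split; first exact: Gel_quotient_f.
  by rewrite (gmulC _ (x 0%N)); apply: quotient_f_cross.
move/(x_reg 1%N ltac:(lia) _ Gd0)/genG1P => [_ [c [Gc Ec]]].
(* Then x0 (w - f c) = f (quotient_f x0) - f c x0 = 0, and x0 regular forces w = f c. *)
have Gy : Gel s I (gsub wG (gmul fG c)) by apply: Gel_gsub Gel_wG (Gel_gmul Gel_fG Gc).
have : genG s I 0 x (gmul (x 0%N) (gsub wG (gmul fG c))).
  apply/genG0P; split; first exact: Gel_gmul.
  move=> m a b Iab; rewrite coef_gmul_gsub.
  rewrite (quotient_fP S0 Z0) // (gEq_gmul (Gel_graded Gel_fG) Ec) //.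
  by rewrite (gmulC c) (gmulCA fG) subrr.
by move/(x_reg 0%N ltac:(lia) _ Gy)/genG0P => [_]; apply: wG_notin_fG.
Qed.

(* f alone is a regular sequence (a nonzerodivisor with G(I) / f G(I) <> 0),
   so depth G(I) = 1. *)
Lemma depth_one : depthG s I 1.
Proof.
split; last by move=> n x x_reg; rewrite leqNgt; apply/negP => /(no_regular_pair x_reg).
exists (fun _ => fG); split.
  move=> k _; split; first exact: Gel_fG.
  by split; [apply/inA_supported; apply: supported_ps0 | ].
split.
  move=> k k1 y Gy; have -> : k = 0%N by lia.
  move/genG0P => [_ E]; apply/genG0P; split => //.
  apply: fG_cancel (Gel_graded Gy) (Gel_graded (@Gel_gzero K s)) _.
  by move=> n a b Iab; rewrite E // coef_gmul_fG; case: ifP.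
move/genG1P => [_ [c [_ Ec]]].
have /Ec : ~~ powExp s 1 0 0 by rewrite /powExp; lia.
by rewrite gmulC coef_gmul_fG /= /gone /ps1 /= => /eqP; rewrite oner_eq0.
Qed.

End Depth.

Section Dimension.
Variable K : fieldType.
Variable s : nat.
Hypothesis s_gt0 : (0 < s)%N.
Implicit Types g h x y z : grr K.
Notation I := (Iid K s).

(* Reading the coefficients of X^n Y^b in degree n gives a ring morphism
   G(I) -> K[T, Y], g |-> sum g_n(n, b) T^n Y^b, onto a domain.  The preimages
   of 0, (Y) and (T, Y) form a chain of primes of length 2, so dim G(I) >= 2.
   diagPrime k is the preimage of the k-th of these ideals, described by the
   diagonal coefficients required to vanish. *)
Definition diagVanish (k n b : nat) : bool :=
  if k == 0%N then true else if k == 1%N then b == 0%N else (n == 0%N) && (b == 0%N).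

Definition diagPrime (k : nat) g : Prop :=
  Gel s I g /\ forall n b, diagVanish k n b -> g n n b = 0.

Lemma diagVanish_down k n b i j :
  diagVanish k n b -> (i <= n)%N -> (j <= b)%N -> diagVanish k (n - i) (b - j).
Proof. by rewrite /diagVanish; case: ifP => // _; case: ifP => _; lia. Qed.

Lemma diag_gmul g h n b : gradedSupported s g -> gradedSupported s h ->
  gmul g h n n b = \sum_(i < n.+1) \sum_(j < b.+1) g i i j * h (n - i)%N (n - i)%N (b - j)%N.
Proof.
move=> Sg Sh; rewrite coef_gmul; apply: eq_bigr => i _; have i_n := ltn_ord i.
rewrite /psmul (eq_bigr (fun i' : 'I_n.+1 => if i' == i :> nat then
  \sum_(j < b.+1) g i i j * h (n - i)%N (n - i)%N (b - j)%N else 0)); last first.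
  move=> i' _; have i'_n := ltn_ord i'.
  have [->//|i'i] := eqVneq (i' : nat) (i : nat).
  apply: big1 => j _.
  have [g0|gn0] := eqVneq (g i i' j) 0; first by rewrite g0 mul0r.
  have [h0|hn0] := eqVneq (h (n - i)%N (n - i')%N (b - j)%N) 0; first by rewrite h0 mulr0.
  by have := Sg _ _ _ gn0; have := Sh _ _ _ hn0; move: i'i; rewrite /powExp; lia.
by rewrite (sum_delta _ _ (fun=> \sum_(j < b.+1) _)) i_n.
Qed.

Lemma diagPrime_gmul k a g : gradedSupported s a -> gradedSupported s g ->
  (forall n b, diagVanish k n b -> g n n b = 0) ->
  forall n b, diagVanish k n b -> gmul a g n n b = 0.
Proof.
move=> Sa Sg g0 n b kn; rewrite diag_gmul //; apply: big1 => i _; apply: big1 => j _.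
have := ltn_ord i; have := ltn_ord j => jb i_n.
by rewrite g0 ?mulr0 //; apply: diagVanish_down => //; lia.
Qed.

Definition diagPoly (N : nat) g : {poly {poly K}} := \poly_(n < N) \poly_(b < N) g n n b.
Definition diagPoly0 (N : nat) g : {poly K} := \poly_(n < N) g n n 0%N.

Lemma diagPoly_exact g : Gel s I g -> exists N0, forall N, (N0 <= N)%N ->
  (forall n b, (diagPoly N g)`_n`_b = g n n b) /\ (forall n, (diagPoly0 N g)`_n = g n n 0%N).
Proof.
move=> /Gel_supported [Sg [Ng SgN]]; exists (Ng + (2 * s + 1) * Ng).+1 => N NN.
have Z1 n b : (Ng <= n)%N -> g n n b = 0.
  by move=> Ngn; apply/eqP; apply: contraT => /(SgN n Ngn); rewrite /powExp; lia.
have Z2 n b : (N <= b)%N -> g n n b = 0.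
  move=> Nb; have [Ngn|nNg] := leqP Ng n; first exact: Z1.
  by apply/eqP; apply: contraT => /(Sg n); rewrite /powExp; nia.
split.
  move=> n b; rewrite /diagPoly coef_poly; case: (ltnP n N) => nN; last by rewrite coef0 Z1 //; lia.
  by rewrite coef_poly; case: (ltnP b N) => bN //; rewrite Z2.
by move=> n; rewrite /diagPoly0 coef_poly; case: (ltnP n N) => nN //; rewrite Z1 //; lia.
Qed.

Lemma diagPoly_mul g h : Gel s I g -> Gel s I h -> exists N,
  (forall n b, (diagPoly N g)`_n`_b = g n n b) /\
  (forall n b, (diagPoly N h)`_n`_b = h n n b) /\
  (forall n b, (diagPoly N g * diagPoly N h)`_n`_b = gmul g h n n b) /\
  (forall n, (diagPoly0 N g)`_n = g n n 0%N) /\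
  (forall n, (diagPoly0 N h)`_n = h n n 0%N) /\
  (forall n, (diagPoly0 N g * diagPoly0 N h)`_n = gmul g h n n 0%N).
Proof.
move=> Gg Gh; have [N1 E1] := diagPoly_exact Gg; have [N2 E2] := diagPoly_exact Gh.
pose N := (N1 + N2)%N.
have [P1 P01] := E1 N ltac:(lia); have [P2 P02] := E2 N ltac:(lia).
have Sg := Gel_graded Gg; have Sh := Gel_graded Gh.
exists N; do 2!split => //; split.
  move=> n b; rewrite coefM coef_sum diag_gmul //; apply: eq_bigr => i _.
  by rewrite coefM; apply: eq_bigr => j _; rewrite P1 P2.
do 2!split => //; move=> n; rewrite coefM diag_gmul //; apply: eq_bigr => i _.
by rewrite big_ord1 P01 P02.
Qed.

Lemma diagPrime_mul k g h : (k <= 2)%N -> Gel s I g -> Gel s I h ->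
  diagPrime k (gmul g h) -> diagPrime k g \/ diagPrime k h.
Proof.
move=> k2 Gg Gh [_ gh0].
have [N [Pg [Ph [Pgh [P0g [P0h P0gh]]]]]] := diagPoly_mul Gg Gh.
case: k k2 gh0 => [|[|[|k]]] // _ gh0.
- have : diagPoly N g * diagPoly N h = 0.
    by apply/polyP => n; apply/polyP => b; rewrite Pgh gh0 // !coef0.
  move/eqP; rewrite mulf_eq0 => /orP [/eqP E|/eqP E]; [left|right]; split => // n b _.
    by rewrite -Pg E !coef0.
  by rewrite -Ph E !coef0.
- have : diagPoly0 N g * diagPoly0 N h = 0.
    by apply/polyP => n; rewrite P0gh gh0 // coef0.
  move/eqP; rewrite mulf_eq0 => /orP [/eqP E|/eqP E]; [left|right]; split => // n b /eqP ->.
    by rewrite -P0g E coef0.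
  by rewrite -P0h E coef0.
- have : g 0%N 0%N 0%N * h 0%N 0%N 0%N = 0.
    rewrite -(gh0 0%N 0%N) // diag_gmul; try exact: Gel_graded.
    by rewrite !big_ord1.
  move/eqP; rewrite mulf_eq0 => /orP [/eqP E|/eqP E]; [left|right]; split => //;
    by move=> n b /andP [/eqP -> /eqP ->].
Qed.

Lemma diagPrime_prime k : (k <= 2)%N -> isPrimeG s I (diagPrime k).
Proof.
move=> k2; split; last split.
- split; first by move=> g [].
  split.
    move=> g h [Gg g0] Gh /geq_gEq E; split => // n b kn.
    by rewrite -E ?g0 //; rewrite /powExp; lia.
  split; first by split; [apply: Gel_gzero | ].
  split.
    move=> g h [Gg g0] [Gh h0]; split; first exact: Gel_gadd.
    by move=> n b kn; rewrite /gadd /psadd g0 ?h0 ?addr0.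
  move=> a g Ga [Gg g0]; split; first exact: Gel_gmul.
  by apply: diagPrime_gmul g0; apply: Gel_graded.
- move=> [_ one0]; have /one0 : diagVanish k 0 0 by rewrite /diagVanish; case: ifP => //; case: ifP.
  by rewrite /gone /ps1 /= => /eqP; rewrite oner_eq0.
- by move=> g h Gg Gh; apply: diagPrime_mul.
Qed.

Lemma diagPrime_chain : chainG s I 2 diagPrime.
Proof.
split; first by move=> k k2; apply: diagPrime_prime.
move=> k k2; split.
  move=> g [Gg g0]; split => // n b kn; apply: g0; move: kn; rewrite /diagVanish.
  by case: k k2 => [|[|k]] //= _; case/andP => _ ->.
case: k k2 => [|[|k]] // _.
- exists (homog 1 (XY K 1)); split.
    split; first by apply: Gel_homog_XY; rewrite /powExp; lia.
    by move=> n b /= /eqP ->; rewrite /homog; case: eqP => // ->.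
  by move=> [_ /(_ 1%N 1%N isT)]; rewrite /homog /XY /= => /eqP; rewrite oner_eq0.
- exists (homog 1 (XY K 0)); split.
    split; first by apply: Gel_homog_XY; rewrite /powExp; lia.
    by move=> n b /= /andP [/eqP -> _].
  by move=> [_ /(_ 1%N 0%N isT)]; rewrite /homog /XY /= => /eqP; rewrite oner_eq0.
Qed.

(* G(I) has dimension >= 2 but depth 1, so it is not Cohen-Macaulay. *)
Lemma not_CM : ~ CMG s I.
Proof.
move=> [d [[[x x_reg] _] [_ dim_le]]].
apply: (no_regular_pair s_gt0 x_reg).
exact: dim_le diagPrime_chain.
Qed.

End Dimension.

Theorem mainTheorem11 (K : fieldType) (s : nat) (hs : (0 < s)%N) :
  let I := Iid K s in
  let Q := Qid K s in
  (* (a) *)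
  ((forall f, powI s I 2 f -> Q f) /\
   lenA s (prodI Q I) (powI s I 2) s /\
   ~ CMG s I) /\
  (* (b) *)
  (forall f, powI s I 3 f <-> prodI Q (powI s I 2) f) /\
  (* (c) *)
  (forall n : nat,
     lenA s (powI s I n.+1) (inA s)
       ((2 * s + 1) * 'C(n.+2, 2) - 2 * s * 'C(n.+1, 1) + s)%N) /\
  (* (d) *)
  depthG s I 1.
Proof.
move=> I Q; split; [split; [|split] | split; [|split]].
- exact: I2_sub_Q.
- exact: lenA_I2_QI.
- exact: not_CM.
- exact: I3_QI2.
- exact: lenA_A_Ipow.
- exact: depth_one.
Qed.
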